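(* Let $\mathcal{A}$ be a central arrangement of rank $r$ and let $\pi=(\pi_1,\ldots,\pi_r)$ be a factorization of $\mathcal{A}$. Suppose $Z\in L(\mathcal{A})$ is modular of rank $r-1$ with $\pi_1=\mathcal{A}\setminus\mathcal{A}_Z$. Then every $H\in\pi_1$ is distinguished with respect to $\pi$. In particular, for $H_0\in\pi_1$ with triple $(\mathcal{A},\mathcal{A}',\mathcal{A}'')$, the restriction map $\mathrm{R}:\mathcal{A}_Z\to\mathcal{A}''$, $H\mapsto H\cap H_0$, is bijective.
   Context: A central arrangement is a finite set of linear hyperplanes in $V=\mathbb{K}^\ell$ ($\mathbb{K}$ a field); its rank is the codimension of the intersection of all its members. $L(\mathcal{A})$ is the set of intersections of subsets of $\mathcal{A}$ ($V$ included), with rank $r(X)=\operatorname{codim}X$; $\mathcal{A}_X=\{H\in\mathcal{A}\mid X\subseteq H\}$. $X\in L(\mathcal{A})$ is modular if $X+Y\in L(\mathcal{A})$ for all $Y\in L(\mathcal{A})$. A partition $\pi=(\pi_1,\ldots,\pi_s)$ is a factorization (nice) if it is independent (for every choice $H_i\in\pi_i$, $\operatorname{codim}(H_1\cap\cdots\cap H_s)=s$) and for every $X\in L(\mathcal{A})\setminus\{V\}$ some non-empty set $\pi_i\cap\mathcal{A}_X$ is a singleton. For $H_0\in\pi_1$ the triple is $\mathcal{A}'=\mathcal{A}\setminus\{H_0\}$, $\mathcal{A}''=\{H_0\cap H\mid H\in\mathcal{A}'\}$; $H_0$ is distinguished with respect to $\pi$ if the non-empty sets $\pi_i\cap\mathcal{A}'$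 form a factorization of $\mathcal{A}'$. *)

From HB Require Import structures.
From mathcomp Require Import all_boot all_order all_algebra.
Set Implicit Arguments. Unset Strict Implicit. Unset Printing Implicit Defensive.
Import GRing.Theory.
Local Open Scope ring_scope.

(* A hyperplane arrangement in V = K^l is given by a finite index type I and
   an injective family H : I -> {vspace 'rV[K]_l} of linear hyperplanes.
   Sub-arrangements (e.g. A' = A \ {H0}) are subsets S : {set I}. *)
Section Arr.
Variables (K : fieldType) (l : nat) (I : finType).
Variable H : I -> {vspace 'rV[K]_l}.

Definition is_hyperplane_family : Prop :=
  forall i, (\dim (H i)).+1 = l.

Definition codim (X : {vspace 'rV[K]_l}) : nat := l - \dim X.

Definition meet (T : {set I}) : {vspace 'rV[K]_l} := (\bigcap_(i in T) H i)%VS.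

Definition arr_rank (S : {set I}) : nat := codim (meet S).

Definition in_L (S : {set I}) (X : {vspace 'rV[K]_l}) : Prop :=
  exists2 T : {set I}, T \subset S & X = meet T.

Definition loc (S : {set I}) (X : {vspace 'rV[K]_l}) : {set I} :=
  [set i in S | (X <= H i)%VS].

Definition modular (S : {set I}) (X : {vspace 'rV[K]_l}) : Prop :=
  in_L S X /\ forall Y, in_L S Y -> in_L S (X + Y)%VS.

Definition independent (P : {set {set I}}) : Prop :=
  forall f : {set I} -> I, (forall B, B \in P -> f B \in B) ->
    codim (\bigcap_(B in P) H (f B))%VS = #|P|.

Definition factorization (S : {set I}) (P : {set {set I}}) : Prop :=
  [/\ partition P S, independent P &
      forall X, in_L S X -> X != fullv ->
        exists2 B, B \in P & #|B :&: loc S X| = 1%N].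

Definition deleted_partition (P : {set {set I}}) (i0 : I) : {set {set I}} :=
  [set B :\ i0 | B in P] :\ set0.

Definition distinguished (S : {set I}) (P : {set {set I}}) (i0 : I) : Prop :=
  factorization (S :\ i0) (deleted_partition P i0).

Definition in_restriction (S : {set I}) (i0 : I) (Y : {vspace 'rV[K]_l}) : Prop :=
  exists2 j, j \in S :\ i0 & Y = (H i0 :&: H j)%VS.

End Arr.

From HB Require Import structures.
From mathcomp Require Import all_boot all_order all_algebra.
From mathcomp Require Import zify.
Set Implicit Arguments. Unset Strict Implicit. Unset Printing Implicit Defensive.
Import GRing.Theory.
Local Open Scope ring_scope.

(* Deleting H0 from pi_1 keeps the blocks a partition, and keeps them independent:
   either pi_1 = {H0} simply disappears, or every block shrinks, injectively, to a
   non-empty subset of itself.  The only way niceness can fail for some X in L(A')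
   is that the nice block of A at X is pi_1 with pi_1 cap A_X = {H0}.  Then X, an
   intersection of hyperplanes of A' outside pi_1, i.e. of A_Z, contains Z, while
   X <= H0 and Z is not contained in H0.

   For the restriction map, two hyperplanes H, H' of A_Z with H0 cap H = H0 cap H'
   would give Z <= H cap H' = H0 cap H <= H0.  For surjectivity let Y = H0 cap H.  By
   modularity Z + Y is in L(A), and it is proper because
   codim (Z cap Y) <= r < codim Z + codim Y; any hyperplane H' containing Z + Y is
   in A_Z and satisfies Y = H0 cap H'. *)

Section Codimension.
Variables (K : fieldType) (l : nat).
Implicit Types U W : {vspace 'rV[K]_l}.

Lemma dim_rowv_full : \dim (fullv : {vspace 'rV[K]_l}) = l.
Proof. by rewrite dimvf /dim /= mul1n. Qed.

Lemma dim_rowv_le U : (\dim U <= l)%N.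
Proof. by have := dimvS (subvf U); rewrite dim_rowv_full. Qed.

Lemma codimS U W : (U <= W)%VS -> (codim W <= codim U)%N.
Proof. by move=> /dimvS; rewrite /codim; lia. Qed.

Lemma codim_fullv U : (codim U == 0%N) = (U == fullv).
Proof.
rewrite eqEdim subvf dim_rowv_full /codim.
by have := dim_rowv_le U; lia.
Qed.

Lemma addv_neq_fullv U W :
  (codim (U :&: W) < codim U + codim W)%N -> (U + W != fullv)%VS.
Proof.
rewrite -codim_fullv /codim => lt_codim.
have := dimv_sum_cap U W; have := dim_rowv_le (U + W)%VS.
have := dim_rowv_le U; have := dim_rowv_le W; lia.
Qed.

End Codimension.

Section Hyperplanes.
Variables (K : fieldType) (l : nat) (I : finType) (H : I -> {vspace 'rV[K]_l}).
Hypothesis Hhyp : is_hyperplane_family H.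
Implicit Types (S T : {set I}) (U X : {vspace 'rV[K]_l}).

Lemma codim_capH i U : (codim (H i :&: U) <= (codim U).+1)%N.
Proof.
have := dimv_sum_cap (H i) U; have := dim_rowv_le (H i + U)%VS.
have := Hhyp i; rewrite /codim; lia.
Qed.

Lemma codim_bigcapH (A : finType) (T : {set A}) (g : A -> I) :
  (codim (\bigcap_(x in T) H (g x)) <= #|T|)%N.
Proof.
rewrite -big_enum cardE; elim: (enum T) => [|x s IHs].
  by rewrite big_nil /codim dim_rowv_full subnn.
by rewrite big_cons /=; apply: leq_trans (codim_capH _ _) _.
Qed.

Lemma hyperplane_maximal i U : (H i <= U)%VS -> U != fullv -> U = H i.
Proof.
move=> sHU; rewrite -codim_fullv => U_proper; apply/esym/eqP.
rewrite eqEdim sHU /=; have := Hhyp i; have := dim_rowv_le U.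
by move: U_proper; rewrite /codim; lia.
Qed.

Lemma codim_capHH i j : H i != H j -> codim (H i :&: H j) = 2%N.
Proof.
move=> neq_ij; have full_ij : (H i + H j)%VS = fullv.
  apply/eqP; apply: contraNT neq_ij => proper_ij.
  apply/eqP; rewrite -(hyperplane_maximal (addvSl _ (H j)) proper_ij).
  exact: hyperplane_maximal (addvSr _ _) proper_ij.
have := dimv_sum_cap (H i) (H j); rewrite full_ij dim_rowv_full.
by have := Hhyp i; have := Hhyp j; rewrite /codim; lia.
Qed.

Lemma capHH_eq a b c d : H a != H b -> H c != H d ->
  (H a :&: H b <= H c :&: H d)%VS -> (H a :&: H b)%VS = (H c :&: H d)%VS.
Proof.
move=> /codim_capHH codim_ab /codim_capHH codim_cd s_abcd; apply/eqP.
by rewrite eqEdim s_abcd /=; move: codim_ab codim_cd; rewrite /codim; lia.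
Qed.

Lemma in_L_subset S1 S2 X : S1 \subset S2 -> in_L H S1 X -> in_L H S2 X.
Proof. by move=> sS12 [T sTS1 ->]; exists T => //; apply: subset_trans sS12. Qed.

Lemma in_L_meet_subv S X : in_L H S X -> (meet H S <= X)%VS.
Proof.
case=> T sTS ->; apply/subv_bigcapP => i Ti.
exact: bigcapv_inf (subsetP sTS i Ti) _.
Qed.

Lemma in_L_capHH S i j : i \in S -> j \in S -> in_L H S (H i :&: H j)%VS.
Proof.
move=> Si Sj; exists [set i; j].
  by apply/subsetP => k; rewrite !inE => /orP[]/eqP->.
apply/eqP; rewrite eqEsubv subv_cap; apply/and3P; split.
- by apply/subv_bigcapP => k; rewrite !inE => /orP[]/eqP->; rewrite ?capvSl ?capvSr.
- by apply: (bigcapv_inf i); rewrite ?inE ?eqxx.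
- by apply: (bigcapv_inf j); rewrite ?inE ?eqxx ?orbT.
Qed.

Lemma in_L_subv_hyperplane S X :
  in_L H S X -> X != fullv -> exists2 i, i \in S & (X <= H i)%VS.
Proof.
case=> T sTS ->; have [-> | [i Ti]] := set_0Vmem T.
  by rewrite /meet big_set0 eqxx.
by exists i; [exact: subsetP sTS i Ti | exact: bigcapv_inf Ti _].
Qed.

Lemma subv_meet_loc S Z T : T \subset loc H S Z -> (Z <= meet H T)%VS.
Proof.
move=> sTZ; apply/subv_bigcapP => i Ti.
by have := subsetP sTZ i Ti; rewrite inE => /andP[].
Qed.

Lemma loc_setD1 S i0 X : loc H (S :\ i0) X = loc H S X :\ i0.
Proof. by apply/setP => i; rewrite !inE andbA. Qed.

End Hyperplanes.

Lemma setD1_id (T : finType) (A : {set T}) x : x \notin A -> A :\ x = A.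
Proof. by move=> Ax; apply/setDidPl; rewrite disjoint_sym disjoints1. Qed.

Section DeletedPartition.
Variables (I : finType) (P : {set {set I}}) (i0 : I).
Hypotheses (trivP : trivIset P) (P0 : set0 \notin P).

Lemma mem_deleted_partition B :
  (B \in deleted_partition P i0) = (B != set0) && (B \in [set C :\ i0 | C in P]).
Proof. exact: in_setD1. Qed.

Lemma cover_deleted_partition : cover (deleted_partition P i0) = cover P :\ i0.
Proof.
apply/setP => x; rewrite in_setD1; apply/bigcupP/andP.
  case=> _ /setD1P[_ /imsetP[B PB ->]] /setD1P[xi0 Bx].
  by split=> //; apply/bigcupP; exists B.
case=> xi0 /bigcupP[B PB Bx]; exists (B :\ i0); last by rewrite !inE xi0.
rewrite mem_deleted_partition (imset_f (fun C => C :\ i0) PB) andbT.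
by apply/set0Pn; exists x; rewrite !inE xi0.
Qed.

Lemma trivIset_deleted_partition : trivIset (deleted_partition P i0).
Proof.
apply/trivIsetP => _ _ /setD1P[_ /imsetP[B PB ->]] /setD1P[_ /imsetP[C PC ->]] neqBC.
apply: disjointW (subsetDl _ _) (subsetDl _ _) _.
by apply: (elimT trivIsetP trivP) => //; apply: contraNneq neqBC => ->.
Qed.

Lemma notin_block_setD1 B : [set i0] \in P -> B \in P -> B != [set i0] -> i0 \notin B.
Proof.
move=> Pi0 PB neqB; rewrite -disjoints1 disjoint_sym.
exact: (elimT trivIsetP trivP).
Qed.

Lemma deleted_partition_block1 :
  [set i0] \in P -> deleted_partition P i0 = P :\ [set i0].
Proof.
move=> Pi0; apply/setP => B; rewrite mem_deleted_partition in_setD1.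
apply/andP/andP => [[nzB /imsetP[C PC defB]] | [neqB PB]].
  have neqC : C != [set i0] by apply: contraNneq nzB => eqC; rewrite defB eqC setDv.
  by rewrite defB setD1_id ?notin_block_setD1.
split; first by apply: contraNneq P0 => <-.
by rewrite -(setD1_id (notin_block_setD1 Pi0 PB neqB)) (imset_f (fun C => C :\ i0) PB).
Qed.

Lemma setD1_block_neq0 B : [set i0] \notin P -> B \in P -> B :\ i0 != set0.
Proof.
move=> Pi0 PB; apply: contraNneq Pi0 => /eqP; rewrite setD_eq0 subset1.
by case/orP=> /eqP eqB; [rewrite -eqB | move: P0; rewrite -eqB PB].
Qed.

Lemma setD1_block_inj :
  [set i0] \notin P -> {in P &, injective (fun B => B :\ i0)}.
Proof.
move=> Pi0 B C PB PC eqBC; have /set0Pn[x Bx] := setD1_block_neq0 Pi0 PB.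
have Cx : x \in C :\ i0 by rewrite -eqBC.
move: Bx Cx; rewrite !inE => /andP[_ Bx] /andP[_ Cx].
by rewrite -(def_pblock trivP PB Bx) (def_pblock trivP PC Cx).
Qed.

Lemma deleted_partition_imset :
  [set i0] \notin P -> deleted_partition P i0 = [set B :\ i0 | B in P].
Proof.
move=> Pi0; apply/setP => B; rewrite mem_deleted_partition.
by apply/andb_idl => /imsetP[C PC ->]; exact: setD1_block_neq0.
Qed.

End DeletedPartition.

Lemma partition_deleted_partition (I : finType) (P : {set {set I}}) S i0 :
  partition P S -> partition (deleted_partition P i0) (S :\ i0).
Proof.
case/and3P => /eqP coverP trivP P0; apply/and3P; split.
- by rewrite cover_deleted_partition coverP.
- exact: trivIset_deleted_partition.
- by rewrite in_setD1 eqxx.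
Qed.

Section Independence.
Variables (K : fieldType) (l : nat) (I : finType) (H : I -> {vspace 'rV[K]_l}).
Hypothesis Hhyp : is_hyperplane_family H.
Implicit Types P : {set {set I}}.

Lemma independent_setD1 P B :
  independent H P -> B \in P -> B != set0 -> independent H (P :\ B).
Proof.
move=> indP PB /set0Pn[x Bx] f fP.
pose g C := if C == B then x else f C.
have gP C : C \in P -> g C \in C.
  by rewrite /g; case: eqVneq => [-> // | neqCB PC]; apply: fP; rewrite !inE neqCB.
have := indP g gP; rewrite (bigD1 B PB) /= /g eqxx.
rewrite (eq_bigr (fun C => H (f C))) => [|C /andP[_ /negPf->] //].
rewrite (eq_bigl (mem (P :\ B))) => [|C]; last by rewrite !inE andbC.
have := codim_bigcapH Hhyp (P :\ B) f.
set W := (\bigcap_(C in P :\ B) H (f C))%VS => codimW codimP.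
rewrite (cardsD1 B P) PB add1n in codimP.
by apply/eqP; rewrite eqn_leq codimW -ltnS -codimP codim_capH.
Qed.

Lemma independent_imset P (h : {set I} -> {set I}) :
  independent H P -> {in P &, injective h} ->
  (forall B, B \in P -> h B \subset B) -> independent H (h @: P).
Proof.
move=> indP injh shP f fP; rewrite (big_imset _ injh) (card_in_imset injh) /=.
by apply: indP => B PB; apply: subsetP (shP B PB) _ (fP _ (imset_f h PB)).
Qed.

Lemma independent_deleted_partition P i0 :
  trivIset P -> set0 \notin P -> independent H P ->
  independent H (deleted_partition P i0).
Proof.
move=> trivP P0 indP; have [Pi0 | Pi0] := boolP ([set i0] \in P).
  rewrite deleted_partition_block1 //; apply: independent_setD1 => //.
  by apply/set0Pn; exists i0; rewrite inE.
rewrite deleted_partition_imset //.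
by apply: independent_imset (setD1_block_inj trivP P0 Pi0) _ => // B _; apply: subsetDl.
Qed.

End Independence.

Lemma distinguished_by_block (K : fieldType) (l : nat) (I : finType)
    (H : I -> {vspace 'rV[K]_l}) S P i0 :
  is_hyperplane_family H -> factorization H S P ->
  (forall X, in_L H (S :\ i0) X -> X != fullv ->
     pblock P i0 :&: loc H S X != [set i0]) ->
  distinguished H S P i0.
Proof.
move=> Hhyp [partP indP niceP] block_i0; have /and3P[_ trivP P0] := partP.
split; first exact: partition_deleted_partition.
  exact: independent_deleted_partition.
move=> X LX X_proper.
have [B PB /eqP/cards1P[k BXk]] := niceP X (in_L_subset (subsetDl S _) LX) X_proper.
have kB : k \in B by have := set11 k; rewrite -BXk => /setIP[].
have neq_k : k != i0.
  apply: contraNneq (block_i0 X LX X_proper) => eq_k.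
  by rewrite -eq_k (def_pblock trivP PB kB) BXk.
exists (B :\ i0).
  rewrite mem_deleted_partition (imset_f (fun C => C :\ i0) PB) andbT.
  by apply/set0Pn; exists k; rewrite !inE neq_k.
apply/eqP/cards1P; exists k.
by rewrite loc_setD1 -setDIl BXk setD1_id // inE eq_sym.
Qed.

Section Restriction.
Variables (K : fieldType) (l : nat) (I : finType) (H : I -> {vspace 'rV[K]_l}).
Hypotheses (Hhyp : is_hyperplane_family H) (Hinj : injective H).
Variables (S : {set I}) (Z : {vspace 'rV[K]_l}) (i0 : I).
Hypothesis Zi0 : ~~ (Z <= H i0)%VS.

Lemma neqH_loc i : i \in loc H S Z -> H i0 != H i.
Proof. by rewrite inE => /andP[_ Zi]; apply: contraNneq Zi0 => ->. Qed.

Lemma loc_complement_block X :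
  in_L H (S :\ i0) X -> (S :\: loc H S Z) :&: loc H S X != [set i0].
Proof.
case=> T sT ->; apply/eqP => block_i0.
have sTZ : T \subset loc H S Z.
  apply/subsetP => t Tt; have /setD1P[neq_t St] := subsetP sT t Tt.
  apply: contraNT neq_t => tZ; rewrite -in_set1 -block_i0 in_setI in_setD tZ St.
  by rewrite inE St; apply: bigcapv_inf Tt _.
have := set11 i0; rewrite -block_i0 => /setIP[_]; rewrite inE => /andP[_ sTi0].
by move: Zi0; rewrite (subv_trans (subv_meet_loc sTZ) sTi0).
Qed.

Lemma restriction_inj :
  {in loc H S Z &, injective (fun i => (H i0 :&: H i)%VS)}.
Proof.
move=> i j Zi Zj /= eq_ij; apply/eqP; apply: contraNT Zi0 => neq_ij.
rewrite -(inj_eq Hinj) in neq_ij.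
have eq_cap : (H i0 :&: H i)%VS = (H i :&: H j)%VS.
  by apply: (capHH_eq Hhyp (neqH_loc Zi) neq_ij); rewrite subv_cap capvSr eq_ij capvSr.
have : (Z <= H i :&: H j)%VS.
  by move: Zi Zj; rewrite !inE subv_cap => /andP[_ ->] /andP[_ ->].
by rewrite -eq_cap => /subv_trans; apply; apply: capvSl.
Qed.

Lemma restriction_onto r Y :
  i0 \in S -> arr_rank H S = r -> modular H S Z -> codim Z = r.-1 ->
  in_restriction H S i0 Y -> exists2 i, i \in loc H S Z & Y = (H i0 :&: H i)%VS.
Proof.
move=> Si0 rankS [LZ modZ] codimZ [j /setD1P[neq_j Sj] ->].
have neq_i0j : H i0 != H j by rewrite (inj_eq Hinj) eq_sym.
have LY := in_L_capHH H Si0 Sj.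
have proper : (Z + (H i0 :&: H j) != fullv)%VS.
  apply: addv_neq_fullv; rewrite codimZ codim_capHH //.
  have : (meet H S <= Z :&: (H i0 :&: H j))%VS by rewrite subv_cap !in_L_meet_subv.
  by move/codimS; rewrite -/(arr_rank H S) rankS; lia.
have [i Si sZYi] := in_L_subv_hyperplane (modZ _ LY) proper.
have Zi : i \in loc H S Z by rewrite inE Si (subv_trans (addvSl _ _) sZYi).
exists i => //; apply: (capHH_eq Hhyp neq_i0j (neqH_loc Zi)).
by rewrite subv_cap capvSl (subv_trans (addvSr _ _) sZYi).
Qed.

End Restriction.

Theorem lemma3p10 (K : fieldType) (l : nat) (I : finType)
    (H : I -> {vspace 'rV[K]_l})
    (Hhyp : is_hyperplane_family H) (Hinj : injective H)
    (r : nat) (Hrank : arr_rank H [set: I] = r)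
    (P : {set {set I}}) (HP : factorization H [set: I] P) (HPcard : #|P| = r)
    (pi1 : {set I}) (Hpi1 : pi1 \in P)
    (Z : {vspace 'rV[K]_l}) (HZmod : modular H [set: I] Z)
    (HZrank : codim Z = r.-1)
    (Hpi1Z : pi1 = [set: I] :\: loc H [set: I] Z) :
  (forall i0, i0 \in pi1 -> distinguished H [set: I] P i0) /\
  (forall i0, i0 \in pi1 ->
     [/\ forall i, i \in loc H [set: I] Z ->
           in_restriction H [set: I] i0 (H i0 :&: H i)%VS,
         {in loc H [set: I] Z &, injective (fun i => (H i0 :&: H i)%VS)} &
         forall Y, in_restriction H [set: I] i0 Y ->
           exists2 i, i \in loc H [set: I] Z & Y = (H i0 :&: H i)%VS]).
Proof.
have Zi0 i0 : i0 \in pi1 -> ~~ (Z <= H i0)%VS by rewrite Hpi1Z !inE /= andbT.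
have [/and3P[_ trivP _] _ _] := HP.
split=> i0 pi1_i0.
  apply: distinguished_by_block => // X LX _.
  rewrite (def_pblock trivP Hpi1 pi1_i0) Hpi1Z.
  by apply: (loc_complement_block _ LX); apply: Zi0.
split.
- move=> i Zi; exists i => //; rewrite in_setD1 in_setT andbT.
  by apply: contraNneq (neqH_loc (Zi0 _ pi1_i0) Zi) => ->.
- exact: (restriction_inj Hhyp Hinj (Zi0 _ pi1_i0)).
- by move=> Y; apply: (restriction_onto Hhyp Hinj (Zi0 _ pi1_i0) _ Hrank HZmod HZrank).
Qed.
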